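(* If $\Gamma$ is a mutation-finite connected graph with at least $4$ vertices, then $\Gamma$ does not contain $\mathbf{Z}_3$ as a subgraph.
   Context: A graph here is a finite directed multigraph with no loops and no oriented $2$-cycles; multiple arrows in the same direction are allowed. The mutation $\mu_k\Gamma$ at a vertex $k$: for every pair of arrows $i\to k$, $k\to j$ add an arrow $i\to j$; reverse all arrows incident to $k$; then delete pairs of opposite arrows $i\to j$, $j\to i$ until no oriented $2$-cycles remain. $\Gamma$ is mutation-finite if only finitely many isomorphism classes of graphs are obtainable from it by sequences of mutations. Connected means the underlying undirected graph is connected. Subgraph always means full (induced) subgraph: a subset of the vertices together with all arrows between them. $\mathbf{Z}_3$ is the graph with three vertices $x_1,x_2,x_3$ and exactly two arrows $x_1\to x_2$, two arrows $x_2\to x_3$, and two arrows $x_3\to x_1$. *)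

From mathcomp Require Import all_boot all_fingroup.
Set Implicit Arguments. Unset Strict Implicit. Unset Printing Implicit Defensive.

(* A graph on the vertex set 'I_n is given by its arrow counts:
   arr i j = number of arrows i -> j. *)
Definition graph (n : nat) := 'I_n -> 'I_n -> nat.

Definition is_graph n (g : graph n) : Prop :=
  (forall i, g i i = 0) /\ (forall i j, g i j = 0 \/ g j i = 0).

(* Mutation at k: for i, j <> k, after adding g i k * g k j arrows i -> j
   (and g j k * g k i arrows j -> i), cancel opposite pairs;
   arrows incident to k are reversed. *)
Definition mutate n (k : 'I_n) (g : graph n) : graph n :=
  fun i j =>
    if (i == k) || (j == k) then g j i
    else (g i j + g i k * g k j) - (g j i + g j k * g k i).

Definition mutseq n (g : graph n) (s : seq 'I_n) : graph n :=
  foldl (fun h k => mutate k h) g s.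

Definition graph_iso n (g h : graph n) : Prop :=
  exists s : {perm 'I_n}, forall i j, h (s i) (s j) = g i j.

Definition mutation_finite n (g : graph n) : Prop :=
  exists (m : nat) (F : 'I_m -> graph n),
    forall s : seq 'I_n, exists t : 'I_m, graph_iso (mutseq g s) (F t).

Definition undirected_adj n (g : graph n) : rel 'I_n :=
  fun i j => (0 < g i j) || (0 < g j i).

Definition connected_graph n (g : graph n) : Prop :=
  forall i j, connect (undirected_adj g) i j.

Definition contains_Z3 n (g : graph n) : Prop :=
  exists x1 x2 x3 : 'I_n,
    [/\ x1 != x2, x2 != x3 & x3 != x1] /\
    [/\ g x1 x2 = 2, g x2 x3 = 2 & g x3 x1 = 2] /\
    [/\ g x2 x1 = 0, g x3 x2 = 0 & g x1 x3 = 0].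

(* A cyclic triangle p -> q -> r -> p without reverse arrows, whose
   multiplicities a, b, c are all at least 2 and not all equal to 2, behaves
   like a Markov triple: mutating at the vertex q opposite the smallest
   multiplicity c replaces c by ab - c > c.  Iterating, the multiplicities
   become unbounded, whereas in a mutation-finite graph they are bounded since
   there are finitely many isomorphism classes.  So it suffices to reach such
   a triangle from a graph containing Z3.

   By connectedness some vertex v outside Z3 is joined to it, and mutations
   inside the full subgraph on Z3 and v commute with restriction to it.  If
   v is joined to Z3 by at least 3 arrows, this together with an adjacent
   double arrow of Z3 gives a path of multiplicities at least 2 with sum at
   least 5, which is such a triangle at once or after one mutation.  The
   finitely many remaining configurations are settled by computation, each
   within two mutations. *)

From mathcomp Require Import all_boot all_fingroup zify.
Set Implicit Arguments. Unset Strict Implicit. Unset Printing Implicit Defensive.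

Section Triangles.

Variable n : nat.
Implicit Types (h : graph n) (p q r : 'I_n).

Definition triangle_weight h p q r := h p q + h q r + h r p.

Definition large_triangle h p q r : bool :=
  [&& p != q, q != r, r != p, h q p == 0, h r q == 0, h p r == 0,
      2 <= h p q, 2 <= h q r, 2 <= h r p & 7 <= triangle_weight h p q r].

Lemma large_triangle_rot h p q r :
  large_triangle h p q r = large_triangle h q r p.
Proof.
rewrite /large_triangle /triangle_weight.
by case: (p != q) (q != r) (r != p) => [] [] [] //=; lia.
Qed.

Lemma triangle_weight_rot h p q r :
  triangle_weight h p q r = triangle_weight h q r p.
Proof. by rewrite /triangle_weight -addnA addnC. Qed.

Lemma double_min_lt_mul a b c :
  2 <= c -> c <= a -> c <= b -> 7 <= a + b + c -> c.*2 < a * b.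
Proof.
move=> c2 ca cb abc; have cc : c * c <= a * b by apply: leq_mul.
by case: (ltnP 2 c) => c3; nia.
Qed.

Lemma mutate_large_triangle h p q r :
  large_triangle h p q r -> h r p <= h p q -> h r p <= h q r ->
  large_triangle (mutate q h) p r q &&
  (triangle_weight h p q r < triangle_weight (mutate q h) p r q).
Proof.
move=> /and4P[pq qr rp /and4P[/eqP qp0 /eqP rq0 /eqP pr0 bounds]] ca cb.
have grow : (h r p).*2 < h p q * h q r.
  by apply: double_min_lt_mul => //; move: bounds; rewrite /triangle_weight; lia.
have [qp rq pr] : [/\ q != p, r != q & p != r] by split; rewrite eq_sym.
rewrite /large_triangle /triangle_weight /mutate !eqxx !orbT
  ?(negbTE pq) ?(negbTE qr) ?(negbTE rp) ?(negbTE qp) ?(negbTE rq) ?(negbTE pr)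
  /= qp0 rq0 pr0.
by move: bounds; rewrite /triangle_weight; lia.
Qed.

Lemma large_triangle_grows h p q r :
  large_triangle h p q r ->
  exists k p' q' r', large_triangle (mutate k h) p' q' r' &&
                     (triangle_weight h p q r <
                      triangle_weight (mutate k h) p' q' r').
Proof.
wlog min_rp : p q r / (h r p <= h p q) && (h r p <= h q r).
  move=> gen t.
  have [min_rp|not_rp] := boolP ((h r p <= h p q) && (h r p <= h q r)).
    exact: gen.
  have [min_pq|not_pq] := boolP ((h p q <= h q r) && (h p q <= h r p)).
    by rewrite large_triangle_rot triangle_weight_rot in t *; apply: gen.
  rewrite 2!large_triangle_rot 2!triangle_weight_rot in t *; apply: gen => //.
  by move: not_rp not_pq; lia.
move=> t; exists q, p, r, q.
by apply: mutate_large_triangle t _ _; move: min_rp; lia.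
Qed.

Lemma mutseq_cat h s t : mutseq h (s ++ t) = mutseq (mutseq h s) t.
Proof. exact: foldl_cat. Qed.

Lemma large_triangle_unbounded h p q r N :
  large_triangle h p q r ->
  exists s p' q' r', large_triangle (mutseq h s) p' q' r' &&
                     (N <= triangle_weight (mutseq h s) p' q' r').
Proof.
move=> t; elim: N => [|N [s [p' [q' [r' /andP[t' le]]]]]].
  by exists [::], p, q, r; rewrite andbT.
have [k [p2 [q2 [r2 /andP[t2 lt]]]]] := large_triangle_grows t'.
exists (rcons s k), p2, q2, r2.
by rewrite -cats1 mutseq_cat t2 /=; move: le lt; lia.
Qed.

Definition reaches_large_triangle h :=
  exists s p q r, large_triangle (mutseq h s) p q r.

Lemma mutation_finite_bounded h :
  mutation_finite h -> exists B, forall s i j, mutseq h s i j <= B.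
Proof.
case=> m [F classesF].
exists (\max_(t < m) \max_(i : 'I_n) \max_(j : 'I_n) F t i j) => s i j.
case: (classesF s) => t [sigma iso]; rewrite -iso.
apply: leq_trans (leq_bigmax t).
apply: leq_trans (leq_bigmax (sigma i)).
exact: (leq_bigmax (sigma j)).
Qed.

Lemma mutation_finite_no_large_triangle h :
  mutation_finite h -> ~ reaches_large_triangle h.
Proof.
move=> /mutation_finite_bounded[B leB] [s0 [p [q [r t]]]].
have [s [p' [q' [r' /andP[_]]]]] := large_triangle_unbounded (3 * B).+1 t.
have := leB (s0 ++ s) p' q'; have := leB (s0 ++ s) q' r'.
have := leB (s0 ++ s) r' p'; rewrite /triangle_weight mutseq_cat; lia.
Qed.

Lemma path_reaches_large_triangle h p q r :
  is_graph h -> p != q -> q != r -> r != p ->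
  2 <= h p q -> 2 <= h q r -> 5 <= h p q + h q r -> reaches_large_triangle h.
Proof.
move=> [_ h_asym] pq qr rp a2 b2 ab5.
have qp0 : h q p = 0 by case: (h_asym p q) a2 => ->.
have rq0 : h r q = 0 by case: (h_asym q r) b2 => ->.
have [qp rq pr] : [/\ q != p, r != q & p != r] by split; rewrite eq_sym.
have [c2|c1] := leqP 2 (h r p).
  have pr0 : h p r = 0 by case: (h_asym r p) c2 => ->.
  exists [::], p, q, r; rewrite /large_triangle /triangle_weight /= pq qr rp.
  by rewrite qp0 rq0 pr0 /=; lia.
exists [:: q], p, r, q.
rewrite /large_triangle /triangle_weight /mutseq /= /mutate !eqxx !orbT
  ?(negbTE pq) ?(negbTE qr) ?(negbTE rp) ?(negbTE qp) ?(negbTE rq) ?(negbTE pr)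
  /= qp0 rq0.
have ab6 : 6 <= h p q * h q r by nia.
lia.
Qed.

End Triangles.

Lemma mutseq_restrict m n (f : 'I_m -> 'I_n) (g : graph n) (h : graph m) s :
  injective f -> (forall i j, g (f i) (f j) = h i j) ->
  forall i j, mutseq g (map f s) (f i) (f j) = mutseq h s i j.
Proof.
move=> inj_f; elim: s g h => [|k s IHs] g h gh //=.
apply: IHs => i j; rewrite /mutate !(inj_eq inj_f).
by case: ifP => _; rewrite !gh.
Qed.

Lemma reaches_large_triangle_restrict m n (f : 'I_m -> 'I_n) g h :
  injective f -> (forall i j, g (f i) (f j) = h i j) ->
  reaches_large_triangle h -> reaches_large_triangle g.
Proof.
move=> inj_f gh [s [p [q [r t]]]]; exists (map f s), (f p), (f q), (f r).
rewrite /large_triangle /triangle_weight !(mutseq_restrict s inj_f gh).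
by rewrite !(inj_eq inj_f).
Qed.

Definition Z3_with_vertex (a0 b0 a1 b1 a2 b2 : nat) : graph 4 := fun i j =>
  match val i, val j with
  | 0, 1 | 1, 2 | 2, 0 => 2
  | 3, 0 => a0 | 0, 3 => b0
  | 3, 1 => a1 | 1, 3 => b1
  | 3, 2 => a2 | 2, 3 => b2
  | _, _ => 0
  end.

Definition has_large_triangle_on n (vs : seq 'I_n) (h : graph n) : bool :=
  has (fun p => has (fun q => has (large_triangle h p q) vs) vs) vs.

Lemma has_large_triangle_onP n (vs : seq 'I_n) (h : graph n) :
  has_large_triangle_on vs h -> exists p q r, large_triangle h p q r.
Proof. by case/hasP=> p _ /hasP[q _ /hasP[r _ t]]; exists p, q, r. Qed.

(* The next definitions make the check [Z3_with_vertex_table] fast under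
   [vm_compute]: [enum 'I_4] does not reduce (it goes through the opaque
   [idP]), nested mutations would be re-evaluated at every entry unless
   tabulated, and [vm_compute] evaluates both arguments of [==>], hence the
   [if] there. *)
Definition vertices4 : seq 'I_4 :=
  [:: @Ordinal 4 0 isT; @Ordinal 4 1 isT; @Ordinal 4 2 isT; @Ordinal 4 3 isT].

Definition tabulate (h : graph 4) : graph 4 :=
  let t := [seq [seq h i j | j <- vertices4] | i <- vertices4] in
  fun i j => nth 0 (nth [::] t i) j.

Lemma tabulateE h i j : tabulate h i j = h i j.
Proof.
case: i j => [[|[|[|[|i]]]] ?] [[|[|[|[|j]]]] ?] //=;
  by congr h; apply: val_inj.
Qed.

Definition mutseq_tab (h : graph 4) (s : seq 'I_4) : graph 4 :=
  foldl (fun h k => tabulate (mutate k h)) h s.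

Lemma mutseq_tabE h s i j : mutseq_tab h s i j = mutseq h s i j.
Proof.
elim: s h i j => //= k s IHs h i j; rewrite IHs.
have := mutseq_restrict s (@inj_id _) (tabulateE (mutate k h)).
by rewrite map_id; apply.
Qed.

Lemma Z3_with_vertex_table :
  all (fun a0 => all (fun b0 => all (fun a1 => all (fun b1 =>
  all (fun a2 => all (fun b2 =>
    if [&& (a0 == 0) || (b0 == 0), (a1 == 0) || (b1 == 0),
           (a2 == 0) || (b2 == 0) & 0 < a0 + b0 + a1 + b1 + a2 + b2]
    then has (fun k => has (fun l => has_large_triangle_on vertices4
           (mutseq_tab (Z3_with_vertex a0 b0 a1 b1 a2 b2) [:: k; l]))
           vertices4) vertices4
    else true)
  (iota 0 3)) (iota 0 3)) (iota 0 3)) (iota 0 3)) (iota 0 3)) (iota 0 3).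
Proof. by vm_compute. Qed.

Lemma small_Z3_with_vertex_reaches_large_triangle a0 b0 a1 b1 a2 b2 :
  a0 < 3 -> b0 < 3 -> a1 < 3 -> b1 < 3 -> a2 < 3 -> b2 < 3 ->
  (a0 == 0) || (b0 == 0) -> (a1 == 0) || (b1 == 0) -> (a2 == 0) || (b2 == 0) ->
  0 < a0 + b0 + a1 + b1 + a2 + b2 ->
  reaches_large_triangle (Z3_with_vertex a0 b0 a1 b1 a2 b2).
Proof.
have small x : x < 3 -> x \in iota 0 3 by rewrite mem_iota.
move=> /small a0s /small b0s /small a1s /small b1s /small a2s /small b2s.
move=> v0 v1 v2 pos.
move: Z3_with_vertex_table => /allP/(_ _ a0s)/allP/(_ _ b0s)/allP/(_ _ a1s).
move=> /allP/(_ _ b1s)/allP/(_ _ a2s)/allP/(_ _ b2s).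
rewrite v0 v1 v2 pos => /hasP[k _ /hasP[l _ /has_large_triangle_onP[p [q [r]]]]].
rewrite /large_triangle /triangle_weight !mutseq_tabE.
by exists [:: k; l], p, q, r.
Qed.

Lemma Z3_with_vertex_is_graph a0 b0 a1 b1 a2 b2 :
  (a0 == 0) || (b0 == 0) -> (a1 == 0) || (b1 == 0) -> (a2 == 0) || (b2 == 0) ->
  is_graph (Z3_with_vertex a0 b0 a1 b1 a2 b2).
Proof.
move=> /orP[/eqP|/eqP] v0 /orP[/eqP|/eqP] v1 /orP[/eqP|/eqP] v2;
  split=> [[[|[|[|[|i]]]] ?] //|];
  case=> [[|[|[|[|i]]]] ?] [[|[|[|[|j]]]] ?] //=; by [left | right].
Qed.

Lemma Z3_with_vertex_reaches_large_triangle a0 b0 a1 b1 a2 b2 :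
  (a0 == 0) || (b0 == 0) -> (a1 == 0) || (b1 == 0) -> (a2 == 0) || (b2 == 0) ->
  0 < a0 + b0 + a1 + b1 + a2 + b2 ->
  reaches_large_triangle (Z3_with_vertex a0 b0 a1 b1 a2 b2).
Proof.
move=> v0 v1 v2 pos.
have path := path_reaches_large_triangle (Z3_with_vertex_is_graph v0 v1 v2).
pose x k := nth ord0 vertices4 k.
have [?|la0] := leqP 3 a0.
  by apply: (path (x 3) (x 0) (x 1)) => //; rewrite /x /Z3_with_vertex /=; lia.
have [?|lb0] := leqP 3 b0.
  by apply: (path (x 2) (x 0) (x 3)) => //; rewrite /x /Z3_with_vertex /=; lia.
have [?|la1] := leqP 3 a1.
  by apply: (path (x 3) (x 1) (x 2)) => //; rewrite /x /Z3_with_vertex /=; lia.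
have [?|lb1] := leqP 3 b1.
  by apply: (path (x 0) (x 1) (x 3)) => //; rewrite /x /Z3_with_vertex /=; lia.
have [?|la2] := leqP 3 a2.
  by apply: (path (x 3) (x 2) (x 0)) => //; rewrite /x /Z3_with_vertex /=; lia.
have [?|lb2] := leqP 3 b2.
  by apply: (path (x 1) (x 2) (x 3)) => //; rewrite /x /Z3_with_vertex /=; lia.
exact: small_Z3_with_vertex_reaches_large_triangle.
Qed.

Definition Z3_on n (g : graph n) x1 x2 x3 : Prop :=
  [/\ x1 != x2, x2 != x3 & x3 != x1] /\
  [/\ g x1 x2 = 2, g x2 x3 = 2 & g x3 x1 = 2] /\
  [/\ g x2 x1 = 0, g x3 x2 = 0 & g x1 x3 = 0].

Lemma Z3_neighbour_reaches_large_triangle n (g : graph n) x1 x2 x3 v :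
  is_graph g -> Z3_on g x1 x2 x3 -> v \notin [:: x1; x2; x3] ->
  0 < g v x1 + g x1 v + g v x2 + g x2 v + g v x3 + g x3 v ->
  reaches_large_triangle g.
Proof.
move=> [g0 g_asym] [[n12 n23 n31] [[e12 e23 e31] [z21 z32 z13]]] v_out adj.
pose f := tnth [tuple x1; x2; x3; v].
have inj_f : injective f.
  apply/tuple_uniqP; move: v_out; rewrite /= !inE !negb_or => /and3P[nv1 nv2 nv3].
  by rewrite n12 n23 (eq_sym x1) n31 !(eq_sym _ v) nv1 nv2 nv3.
have fg i j : g (f i) (f j) =
    Z3_with_vertex (g v x1) (g x1 v) (g v x2) (g x2 v) (g v x3) (g x3 v) i j.
  case: i j => [[|[|[|[|i]]]] ?] [[|[|[|[|j]]]] ?] //=;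
  by rewrite /f /tnth /= ?g0.
have valid x : (g v x == 0) || (g x v == 0).
  by case: (g_asym v x) => ->; rewrite ?orbT.
apply: (reaches_large_triangle_restrict inj_f fg).
exact: Z3_with_vertex_reaches_large_triangle (valid x1) (valid x2) (valid x3) adj.
Qed.

Lemma exists_notin_seq (T : finType) (s : seq T) :
  size s < #|T| -> exists x, x \notin s.
Proof.
move=> lt_s; apply/existsP; rewrite -negb_forall; apply: contraTN lt_s.
move=> /forallP s_all; rewrite -leqNgt; apply: leq_trans (card_size s).
by apply/subset_leq_card/subsetP => x _; apply: s_all.
Qed.

Lemma connected_graph_edge_out n (g : graph n) (pT : predType 'I_n) (A : pT) u w :
  connected_graph g -> u \in A -> w \notin A ->
  exists x y, [/\ x \in A, y \notin A & undirected_adj g x y].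
Proof.
move=> conn uA wA.
have [/existsP[x /existsP[y /and3P[]]]|none] :=
  boolP [exists x, exists y, [&& x \in A, y \notin A & undirected_adj g x y]].
  by exists x, y.
have closedA : closed (undirected_adj g) A.
  move=> x y xy; apply/idP/idP => [xA|yA]; apply/negPn/negP => notA;
    case/negP: none; apply/existsP.
  - by exists x; apply/existsP; exists y; rewrite xA notA xy.
  - by exists y; apply/existsP; exists x; rewrite yA notA /undirected_adj orbC.
have := closed_connect closedA (conn u w).
by rewrite !unfold_in /= uA (negbTE wA).
Qed.

Theorem lemma6 (n : nat) (g : graph n) :
  is_graph g -> mutation_finite g -> connected_graph g -> 4 <= n ->
  ~ contains_Z3 g.
Proof.
move=> gG mf conn n4 [x1 [x2 [x3 Z3]]].
apply: (mutation_finite_no_large_triangle mf).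
have [w w_out] : exists w, w \notin [:: x1; x2; x3].
  by apply: exists_notin_seq; rewrite card_ord.
have [u [v [u_in v_out uv]]] :=
  connected_graph_edge_out conn (mem_head x1 _) w_out.
apply: (Z3_neighbour_reaches_large_triangle gG Z3 v_out).
by move: u_in uv; rewrite !inE /undirected_adj => /or3P[] /eqP->; lia.
Qed.
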